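(* Let $\alpha\in\mathbb{N}$, let $m$ be a positive odd integer with $m>6\alpha+2$, and let $\mathbb{S}=\langle 6,6\alpha+2,m\rangle$. Define $\beta_1=6\,x_1$, $\beta_2=(6\alpha+2)\,x_2$, $\beta_3=m\,x_3$, where $x_1=\min\{x\ge1:6x\in\langle 6\alpha+2,m\rangle\}$, $x_2=\min\{x\ge1:(6\alpha+2)x\in\langle 6,m\rangle\}$, $x_3=\min\{x\ge1:mx\in\langle 6,6\alpha+2\rangle\}$. Factorizations are taken with respect to $(6,6\alpha+2,m)$. Then: (i) If $6\alpha+2<m\le 9\alpha+3$ and $3\mid m$, then $\beta_1=2m$ and its factorizations are $(0,0,2)$ and $\left(\frac{m-k(3\alpha+1)}{3},k,0\right)$ for $k\in\mathbb{N}$ with $k\le\frac{m}{3\alpha+1}$ and $3\mid m-k(3\alpha+1)$. Otherwise, $\beta_1=18\alpha+6$ and its factorizations are $(3\alpha+1,0,0)$ and $(0,3,0)$. (ii) $\beta_2=18\alpha+6$. If $6\alpha+2<m\le 9\alpha+3$ and $3\mid m$, then its factorizations are $\left(\frac{9\alpha+3-m}{3},0,2\right)$, $(3\alpha+1,0,0)$ and $(0,3,0)$. Otherwise, its factorizations are $(3\alpha+1,0,0)$ and $(0,3,0)$. (iii) $\beta_3=2m$ and its factorizations are $(0,0,2)$ and $\left(\frac{m-k(3\alpha+1)}{3},k,0\right)$ for $k\in\mathbb{N}$ with $k\le\frac{m}{3\alpha+1}$ and $3\mid m-k(3\alpha+1)$.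
   Context: $\mathbb{N}=\{0,1,2,\dots\}$. $\langle a_1,\dots,a_e\rangle$ is the set of $\mathbb{N}$-linear combinations of $a_1,\dots,a_e$. A factorization of $a\in\langle a_1,a_2,a_3\rangle$ is a tuple $(\eta_1,\eta_2,\eta_3)\in\mathbb{N}^3$ with $\eta_1a_1+\eta_2a_2+\eta_3a_3=a$. *)

From mathcomp Require Import all_boot.
Set Implicit Arguments. Unset Strict Implicit. Unset Printing Implicit Defensive.

Definition in_sg2 (a b n : nat) : Prop := exists u v : nat, n = u * a + v * b.

Definition is_fact (a1 a2 a3 n e1 e2 e3 : nat) : Prop :=
  e1 * a1 + e2 * a2 + e3 * a3 = n.

Definition is_min_pos (P : nat -> Prop) (x : nat) : Prop :=
  1 <= x /\ P x /\ (forall y, 1 <= y -> P y -> x <= y).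

(* Write 6 alpha + 2 = 2a with a = 3 alpha + 1, so that a is prime to 3, and let
   m be odd with 2a < m.  In a factorization of an even number below 3m the
   exponent of m is even, hence 0 or 2.  For 2m this leaves (0,0,2) or
   3 e1 + a e2 = m; for 6a it leaves 3 e1 + a e2 = 3a, whose only solutions are
   (a,0) and (0,3) because 3 does not divide a, or (with e3 = 2)
   3 e1 + a e2 = 3a - m < a, forcing e2 = 0.  The same parity and divisibility
   arguments give beta3 = 2m and beta2 = 6a, while beta1 is the smaller of the
   two candidates 6a and, when 3 divides m, 2m. *)

From mathcomp Require Import all_boot zify.

Set Implicit Arguments.
Unset Strict Implicit.
Unset Printing Implicit Defensive.

Lemma is_fact_e3_0_or_2 a m n e1 e2 e3 : odd m -> is_fact 6 (2 * a) m n e1 e2 e3 ->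
  ~~ odd n -> n < 3 * m -> e3 = 0 \/ e3 = 2.
Proof.
move=> odd_m; rewrite /is_fact => <- even_n lt_n_3m.
have : e3 < 3 by nia.
case: e3 even_n {lt_n_3m} => [|[|[|//]]]; [left | lia | right] => //.
Qed.

Lemma is_fact_2m a m : 0 < a -> odd m -> forall e1 e2 e3,
  is_fact 6 (2 * a) m (2 * m) e1 e2 e3 <->
  (e1, e2, e3) = (0, 0, 2) \/
  exists k, k * a <= m /\ 3 %| m - k * a /\ (e1, e2, e3) = ((m - k * a) %/ 3, k, 0).
Proof.
move=> a_gt0 odd_m e1 e2 e3.
split; last by case=> [[-> -> ->] | [k [? [? [-> -> ->]]]]]; rewrite /is_fact; lia.
move=> f.
have [e3_0 | e3_2] : e3 = 0 \/ e3 = 2 by apply: (is_fact_e3_0_or_2 odd_m f); rewrite ?oddM //; lia.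
- right; exists e2; move: f; rewrite /is_fact e3_0 => f.
  by do !split; [lia | lia | congr (_, _, _); lia].
- by left; move: f; rewrite /is_fact e3_2 => f; congr (_, _, _); nia.
Qed.

Lemma in_sg2_2m a m : coprime 3 a -> 2 * a < m -> in_sg2 6 (2 * a) (2 * m).
Proof.
move=> co3a lt_2a_m.
have [v v_lt3 av_m] : exists2 v, v < 3 & a * v = m %[mod 3].
  have : a %% 3 = 1 \/ a %% 3 = 2 by move: co3a; rewrite prime_coprime // /dvdn; lia.
  case=> [a1 | a2]; [exists (m %% 3) | exists ((2 * m) %% 3)]; rewrite ?ltn_mod //.
  - by rewrite -modnMml a1 mul1n modn_mod.
  - by rewrite -modnMml a2 modnMmr mulnA; lia.
by exists ((m - a * v) %/ 3), v; move: av_m; nia.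
Qed.

Section Generators_6_2a_m.

Variables a m : nat.
Hypotheses (co3a : coprime 3 a) (odd_m : odd m) (lt_2a_m : 2 * a < m).

Let a_gt0 : 0 < a.
Proof. by move: co3a; rewrite lt0n; apply: contraTneq => ->. Qed.

Lemma is_fact_6a e1 e2 e3 : is_fact 6 (2 * a) m (6 * a) e1 e2 e3 <->
  [/\ (e1, e2, e3) = ((3 * a - m) %/ 3, 0, 2), m <= 3 * a & 3 %| m] \/
  (e1, e2, e3) = (a, 0, 0) \/ (e1, e2, e3) = (0, 3, 0).
Proof.
split; last by case=> [[[-> -> ->] ? ?] | [[-> -> ->] | [-> -> ->]]]; rewrite /is_fact; lia.
move=> f.
have [e3_0 | e3_2] : e3 = 0 \/ e3 = 2 by apply: (is_fact_e3_0_or_2 odd_m f); rewrite ?oddM //; lia.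
- move: f; rewrite /is_fact e3_0 => f.
  have dvd_3e2 : 3 %| e2.
    by rewrite -(Gauss_dvdr _ co3a); apply/dvdnP; exists (a - e1); lia.
  have e2_le3 : e2 <= 3 by nia.
  right; have [e2_0 | e2_3] : e2 = 0 \/ e2 = 3 by lia.
  + by left; congr (_, _, _); lia.
  + by right; congr (_, _, _); lia.
- move: f; rewrite /is_fact e3_2 => f.
  have e2_0 : e2 = 0 by nia.
  by left; split; [congr (_, _, _) | |]; lia.
Qed.

Lemma is_fact_6a_special : m <= 3 * a -> 3 %| m -> forall e1 e2 e3,
  is_fact 6 (2 * a) m (6 * a) e1 e2 e3 <->
  (e1, e2, e3) = ((3 * a - m) %/ 3, 0, 2) \/
  (e1, e2, e3) = (a, 0, 0) \/ (e1, e2, e3) = (0, 3, 0).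
Proof.
move=> le_m_3a dvd_3m e1 e2 e3; rewrite is_fact_6a.
by split=> [[[? _ _] | ?] | [? | ?]]; [left | right | left | right].
Qed.

Lemma is_fact_6a_generic : ~~ ((m <= 3 * a) && (3 %| m)) -> forall e1 e2 e3,
  is_fact 6 (2 * a) m (6 * a) e1 e2 e3 <->
  (e1, e2, e3) = (a, 0, 0) \/ (e1, e2, e3) = (0, 3, 0).
Proof.
move=> not_special e1 e2 e3; rewrite is_fact_6a.
split=> [[[_ le_m_3a dvd_3m] | //] | ?]; last by right.
by move: not_special; rewrite le_m_3a dvd_3m.
Qed.

Lemma min_pos_mul_m x :
  is_min_pos (fun y => in_sg2 6 (2 * a) (m * y)) x -> x = 2.
Proof.
move=> [x_ge1 [[u [v def_mx]] x_min]].
have : x <= 2 by apply: x_min; rewrite // [m * 2]mulnC; exact: in_sg2_2m.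
have : x != 1 by apply/eqP => x1; move: def_mx; rewrite x1; lia.
lia.
Qed.

Lemma min_pos_mul_2a x :
  is_min_pos (fun y => in_sg2 6 m (2 * a * y)) x -> x = 3.
Proof.
move=> [x_ge1 [[u [v def_2ax]] x_min]].
have x_le3 : x <= 3 by apply: x_min => //; exists a, 0; lia.
have f : is_fact 6 (2 * a) m (2 * a * x) u 0 v by rewrite /is_fact def_2ax; lia.
have [v0 | v2] : v = 0 \/ v = 2 by apply: (is_fact_e3_0_or_2 odd_m f); rewrite ?oddM //; nia.
- have : 3 %| x by rewrite -(Gauss_dvdr _ co3a); apply/dvdnP; exists u; lia.
  lia.
- nia.
Qed.

Lemma in_sg2_mul6_small x : 0 < x -> x <= a -> in_sg2 (2 * a) m (6 * x) ->
  x = a \/ 3 * x = m.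
Proof.
move=> x_gt0 x_le_a [v [w def_6x]].
have f : is_fact 6 (2 * a) m (6 * x) 0 v w by rewrite /is_fact def_6x; lia.
have [w0 | w2] : w = 0 \/ w = 2 by apply: (is_fact_e3_0_or_2 odd_m f); rewrite ?oddM //; lia.
- have dvd_3v : 3 %| v by rewrite -(Gauss_dvdr _ co3a); apply/dvdnP; exists x; lia.
  have v_range : 0 < v <= 3 by nia.
  have v3 : v = 3 by lia.
  by left; move: def_6x; rewrite v3 w0; lia.
- have v0 : v = 0 by nia.
  by right; move: def_6x; rewrite v0 w2; lia.
Qed.

Lemma min_pos_mul_6 x :
  is_min_pos (fun y => in_sg2 (2 * a) m (6 * y)) x ->
  6 * x = if (m <= 3 * a) && (3 %| m) then 2 * m else 6 * a.
Proof.
move=> [x_ge1 [sg_6x x_min]].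
have x_le_a : x <= a by apply: x_min; [lia | exists 3, 0; lia].
have := in_sg2_mul6_small x_ge1 x_le_a sg_6x.
case: ifP => [cond | not_cond]; last lia.
have : x <= m %/ 3 by apply: x_min; [lia | exists 0, 2; lia].
lia.
Qed.

End Generators_6_2a_m.

Theorem theorem7 (alpha m x1 x2 x3 : nat) :
  odd m -> 6 * alpha + 2 < m ->
  is_min_pos (fun x => in_sg2 (6 * alpha + 2) m (6 * x)) x1 ->
  is_min_pos (fun x => in_sg2 6 m ((6 * alpha + 2) * x)) x2 ->
  is_min_pos (fun x => in_sg2 6 (6 * alpha + 2) (m * x)) x3 ->
  let beta1 := 6 * x1 in
  let beta2 := (6 * alpha + 2) * x2 in
  let beta3 := m * x3 in
  let fact := fun n e1 e2 e3 => is_fact 6 (6 * alpha + 2) m n e1 e2 e3 in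
  let cond := (6 * alpha + 2 < m) && (m <= 9 * alpha + 3) && (3 %| m) in
  let factsA := fun e1 e2 e3 : nat =>
    (e1, e2, e3) = (0, 0, 2) \/
    exists k : nat, k * (3 * alpha + 1) <= m /\ 3 %| m - k * (3 * alpha + 1) /\
      (e1, e2, e3) = ((m - k * (3 * alpha + 1)) %/ 3, k, 0) in
  let factsB := fun e1 e2 e3 : nat =>
    (e1, e2, e3) = (3 * alpha + 1, 0, 0) \/ (e1, e2, e3) = (0, 3, 0) in
  (* (i) *)
  (if cond then
     beta1 = 2 * m /\ (forall e1 e2 e3, fact beta1 e1 e2 e3 <-> factsA e1 e2 e3)
   else
     beta1 = 18 * alpha + 6 /\
     (forall e1 e2 e3, fact beta1 e1 e2 e3 <-> factsB e1 e2 e3)) /\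
  (* (ii) *)
  beta2 = 18 * alpha + 6 /\
  (if cond then
     forall e1 e2 e3, fact beta2 e1 e2 e3 <->
       ((e1, e2, e3) = ((9 * alpha + 3 - m) %/ 3, 0, 2) \/ factsB e1 e2 e3)
   else
     forall e1 e2 e3, fact beta2 e1 e2 e3 <-> factsB e1 e2 e3) /\
  (* (iii) *)
  beta3 = 2 * m /\
  (forall e1 e2 e3, fact beta3 e1 e2 e3 <-> factsA e1 e2 e3).
Proof.
have -> : 6 * alpha + 2 = 2 * (3 * alpha + 1) by lia.
have -> : 18 * alpha + 6 = 6 * (3 * alpha + 1) by lia.
have -> : 9 * alpha + 3 = 3 * (3 * alpha + 1) by lia.
have : 0 < 3 * alpha + 1 by rewrite addn1.
have : coprime 3 (3 * alpha + 1) by rewrite prime_coprime // dvdn_addr ?dvdn_mulr.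
move: (3 * alpha + 1) => a co3a a_gt0 odd_m lt_2a_m.
move=> /(min_pos_mul_6 co3a odd_m lt_2a_m) ->.
move=> /(min_pos_mul_2a co3a odd_m lt_2a_m) ->.
move=> /(min_pos_mul_m co3a odd_m lt_2a_m) ->.
move=> beta1 beta2 beta3 fact cond factsA factsB.
have fact2m := is_fact_2m a_gt0 odd_m.
have -> : beta2 = 6 * a by rewrite /beta2; lia.
rewrite {}/beta1 {}/beta3 {}/fact {}/factsA {}/factsB {}/cond lt_2a_m [m * 2]mulnC /=.
case: ifP => cond; rewrite ?cond /=.
- have [le_m_3a dvd_3m] := andP cond.
  have fact6a := is_fact_6a_special co3a odd_m lt_2a_m le_m_3a dvd_3m.
  by repeat match goal with |- _ /\ _ => split end => // e1 e2 e3; rewrite ?fact2m ?fact6a.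
- have fact6a := is_fact_6a_generic co3a odd_m lt_2a_m (negbT cond).
  by repeat match goal with |- _ /\ _ => split end => // e1 e2 e3; rewrite ?fact2m ?fact6a.
Qed.
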